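(* Let $x_1,\dots,x_n$ be fixed data, $2\le k\le n$, and $s$ a real-valued permutation-symmetric function of $k$ arguments. Let $(I_1,\dots,I_k)$ be uniformly distributed over all $k$-tuples of distinct indices in $\{1,\dots,n\}$, $X_i^*=x_{I_i}$, $s^*=s(X_1^*,\dots,X_k^* )$, $\mathcal{D}^*=\{I_1,\dots,I_k\}$, and with $\mathbb{E}_*,\mathrm{Cov}_*$ denoting expectation and covariance over this subsampling let $s_0=\mathbb{E}_*[s^*]$, $e_i=\mathbb{E}_*[s^*\mid I_1=i]$ and, for $i\ne j$, $e_{ij}=\mathbb{E}_*[s^*\mid I_1=i,I_2=j]$. For $i\ne j$ define $$w_{ij}^*=\mathbf{1}\{i,j\in\mathcal{D}^*\}-\frac{k-1}{n-1}\mathbf{1}\{i\in\mathcal{D}^*\}-\frac{k-1}{n-1}\mathbf{1}\{j\in\mathcal{D}^*\}+\frac{k(k-1)}{n(n-1)}.$$ Then $$\mathrm{Cov}_*(s^*,w_{ij}^* )=\frac{\binom{k}{2}}{\binom{n}{2}}\,(e_{ij}-e_i-e_j+s_0),$$ and consequently $$\mathrm{ps}\text{-}\mathrm{IJ}_\mathrm{U}(2):=\sum_{i<j}\mathrm{Cov}_*^2(s^*,w_{ij}^* )=\frac{\binom{k}{2}^2}{\binom{n}{2}^2}\sum_{i<j}(e_{ij}-e_i-e_j+s_0)^2.$$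
   Context: Subsampling is without replacement and conditional on the data. *)

From mathcomp Require Import all_boot all_order fingroup perm all_algebra.
Set Implicit Arguments. Unset Strict Implicit. Unset Printing Implicit Defensive.
Import Order.TTheory GRing.Theory Num.Theory.
Local Open Scope ring_scope.

(* A subsample
   (I_1,...,I_k) is an injective map f : 'I_k -> 'I_n; the subsampling
   distribution is uniform on all such maps (sampling without replacement,
   conditional on the data). *)
Definition Omega (n k : nat) : {set {ffun 'I_k -> 'I_n}} :=
  [set f : {ffun 'I_k -> 'I_n} | injectiveb f].

Definition avg (R : realFieldType) (n k : nat) (A : {set {ffun 'I_k -> 'I_n}})
  (Z : {ffun 'I_k -> 'I_n} -> R) : R :=
  (\sum_(f in A) Z f) / (#|A|%:R).

Definition Estar (R : realFieldType) (n k : nat) (Z : {ffun 'I_k -> 'I_n} -> R) : R :=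
  avg (Omega n k) Z.

Definition Covstar (R : realFieldType) (n k : nat) (Z W : {ffun 'I_k -> 'I_n} -> R) : R :=
  Estar (fun f => Z f * W f) - Estar Z * Estar W.

(* The positions 1 and 2 of the subsample (0-based ordinals 0 and 1), k >= 2. *)
Definition pos1 (k : nat) (hk : (2 <= k)%N) : 'I_k := Ordinal (ltnW hk).
Definition pos2 (k : nat) (hk : (2 <= k)%N) : 'I_k := Ordinal hk.

Definition sstar (T : Type) (R : realFieldType) (n k : nat) (x : 'I_n -> T)
  (s : ('I_k -> T) -> R) (f : {ffun 'I_k -> 'I_n}) : R :=
  s (fun a => x (f a)).

Definition Econd1 (R : realFieldType) (n k : nat) (hk : (2 <= k)%N) (i : 'I_n)
  (Z : {ffun 'I_k -> 'I_n} -> R) : R :=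
  avg [set f in Omega n k | f (pos1 hk) == i] Z.

Definition Econd2 (R : realFieldType) (n k : nat) (hk : (2 <= k)%N) (i j : 'I_n)
  (Z : {ffun 'I_k -> 'I_n} -> R) : R :=
  avg [set f in Omega n k | (f (pos1 hk) == i) && (f (pos2 hk) == j)] Z.

(* w_ij star; i in D-star means i \in codom f, the set {I_1,...,I_k}. *)
Definition wstar (R : realFieldType) (n k : nat) (i j : 'I_n)
  (f : {ffun 'I_k -> 'I_n}) : R :=
  ((i \in codom f) && (j \in codom f))%:R
  - (k.-1)%:R / (n.-1)%:R * (i \in codom f)%:R
  - (k.-1)%:R / (n.-1)%:R * (j \in codom f)%:R
  + (k * k.-1)%:R / (n * n.-1)%:R.

From mathcomp Require Import all_boot all_order fingroup perm all_algebra.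
From mathcomp Require Import ring.
From Stdlib Require Import FunctionalExtensionality.
Import Order.TTheory GRing.Theory Num.Theory.
Local Open Scope ring_scope.
Set Implicit Arguments. Unset Strict Implicit. Unset Printing Implicit Defensive.

(* Write D* for the range of the subsample f.  Since s* is invariant under
   permuting the positions of f, expanding 1{i in D*} as a sum over positions
   gives E*[s* 1{i in D*}] = (k/n) e_i and E*[s* 1{i,j in D*}] =
   k(k-1)/(n(n-1)) e_ij; the factors n and n(n-1) are the ratios of the sizes
   of {f}, {f | f p = i} and {f | f p = i, f q = j}, which do not depend on
   i, j because relabelling the indices permutes the subsamples.  For s* = 1
   this shows E*[w_ij*] = 0, so Cov*[s*, w_ij*] = E*[s* w_ij*], and
   k(k-1)/(n(n-1)) = C(k,2)/C(n,2). *)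

Lemma exists_perm_pair (T : finType) (a b c d : T) : a != b -> c != d ->
  exists s : {perm T}, s a = c /\ s b = d.
Proof.
move=> ab cd; have bc : tperm a c b != c.
  by rewrite -{2}(tpermL a c) (inj_eq perm_inj) eq_sym.
exists (tperm a c * tperm (tperm a c b) d)%g; rewrite !permM !tpermL.
by rewrite tpermD // eq_sym.
Qed.

Lemma bin2_ratio (R : numFieldType) (m n : nat) :
  ('C(m, 2)%:R / 'C(n, 2)%:R : R) = (m * m.-1)%:R / (n * n.-1)%:R.
Proof.
have bin2E l : (l * l.-1)%:R = 2 * 'C(l, 2)%:R :> R.
  by rewrite -[l.-1]bin1 mul_bin_diag natrM.
by rewrite !bin2E invfM mulrACA divff ?mul1r // pnatr_eq0.
Qed.

Lemma sum_mul_indicator (R : pzSemiRingType) (T : finType) (A : {set T})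
    (P : pred T) (F : T -> R) :
  \sum_(x in A) F x * (P x)%:R = \sum_(x in [set x in A | P x]) F x.
Proof.
rewrite big_mkcond [RHS]big_mkcond; apply: eq_bigr => x _; rewrite inE.
by case: (x \in A); case: (P x); rewrite ?mulr1 ?mulr0.
Qed.

Lemma natr_in_codom (R : pzSemiRingType) (I : finType) (J : eqType) (f : I -> J)
    (j : J) :
  injective f -> ((j \in codom f)%:R : R) = \sum_a ((f a == j)%:R : R).
Proof.
move=> f_inj; have [/codomP[a ->] | fj] := boolP (j \in codom f).
  rewrite (bigD1 a) //= eqxx big1 ?addr0 // => b ba.
  by rewrite (inj_eq f_inj) (negbTE ba).
rewrite big1 // => a _; case: eqP => // fa.
by case/negP: fj; rewrite -fa codom_f.
Qed.

Lemma natr_in_codom2 (R : pzSemiRingType) (I : finType) (J : eqType) (f : I -> J)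
    (i j : J) :
  injective f -> i != j ->
  (((i \in codom f) && (j \in codom f))%:R : R) =
  \sum_a \sum_(b | b != a) (((f a == i) && (f b == j))%:R : R).
Proof.
move=> f_inj ij; rewrite -mulnb natrM !natr_in_codom // mulr_suml.
apply: eq_bigr => a _; rewrite mulr_sumr (bigD1 a) //=.
rewrite -[RHS]add0r; congr (_ + _).
  by case: eqP => [->|_]; rewrite ?(negbTE ij) ?mulr0 ?mul0r.
by apply: eq_bigr => b _; rewrite -natrM mulnb.
Qed.

Section Subsampling.

Variables (n k : nat).
Local Notation sub := {ffun 'I_k -> 'I_n}.

Definition permute_pos (s : 'S_k) (f : sub) : sub := [ffun a => f (s a)].
Definition rename_idx (s : 'S_n) (f : sub) : sub := [ffun a => s (f a)].

Definition Omega1 (p : 'I_k) (i : 'I_n) : {set sub} :=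
  [set f in Omega n k | f p == i].
Definition Omega2 (p q : 'I_k) (i j : 'I_n) : {set sub} :=
  [set f in Omega n k | (f p == i) && (f q == j)].

Lemma permute_pos_inj s : injective (permute_pos s).
Proof.
move=> f g /ffunP fg; apply/ffunP => a.
by have := fg (s^-1 a)%g; rewrite !ffunE permKV.
Qed.

Lemma rename_idx_inj s : injective (rename_idx s).
Proof.
move=> f g /ffunP fg; apply/ffunP => a.
by have := fg a; rewrite !ffunE => /perm_inj.
Qed.

Lemma injectiveb_permute_pos s f : injectiveb (permute_pos s f) = injectiveb f.
Proof.
apply/injectiveP/injectiveP => f_inj a b.
  by move=> fab; apply: (@perm_inj _ s^-1); apply: f_inj; rewrite !ffunE !permKV.
by rewrite !ffunE => /f_inj /perm_inj.
Qed.

Lemma injectiveb_rename_idx s f : injectiveb (rename_idx s f) = injectiveb f.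
Proof.
apply/injectiveP/injectiveP => f_inj a b.
  by move=> fab; apply: f_inj; rewrite !ffunE fab.
by rewrite !ffunE => /perm_inj /f_inj.
Qed.

Lemma permute_pos_preim_Omega1 s p i :
  permute_pos s @^-1: Omega1 p i = Omega1 (s p) i.
Proof. by apply/setP => f; rewrite !inE injectiveb_permute_pos ffunE. Qed.

Lemma permute_pos_preim_Omega2 s p q i j :
  permute_pos s @^-1: Omega2 p q i j = Omega2 (s p) (s q) i j.
Proof. by apply/setP => f; rewrite !inE injectiveb_permute_pos !ffunE. Qed.

Lemma rename_idx_preim_Omega1 s p i :
  rename_idx s @^-1: Omega1 p (s i) = Omega1 p i.
Proof.
by apply/setP => f; rewrite !inE injectiveb_rename_idx ffunE (inj_eq perm_inj).
Qed.

Lemma rename_idx_preim_Omega2 s p q i j :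
  rename_idx s @^-1: Omega2 p q (s i) (s j) = Omega2 p q i j.
Proof.
apply/setP => f; rewrite !inE injectiveb_rename_idx !ffunE.
by rewrite !(inj_eq perm_inj).
Qed.

Lemma card_Omega1_idx p i i' : #|Omega1 p i| = #|Omega1 p i'|.
Proof.
rewrite -[in RHS](rename_idx_preim_Omega1 (tperm i' i)) tpermL.
by rewrite card_preimset //; apply: rename_idx_inj.
Qed.

Lemma card_Omega2_idx p q i j i' j' : i != j -> i' != j' ->
  #|Omega2 p q i j| = #|Omega2 p q i' j'|.
Proof.
move=> ij ij'; have [s [si sj]] := exists_perm_pair ij' ij.
rewrite -[in RHS](rename_idx_preim_Omega2 s) si sj.
by rewrite card_preimset //; apply: rename_idx_inj.
Qed.

Lemma card_Omega p i : #|Omega n k| = n * #|Omega1 p i|.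
Proof.
rewrite -sum1_card (partition_big (fun f : sub => f p) predT) //=.
rewrite (eq_bigr (fun _ => #|Omega1 p i|)) ?sum_nat_const ?card_ord // => i' _.
by rewrite (card_Omega1_idx p i i') -sum1_card; apply: eq_bigl => f; rewrite !inE.
Qed.

Lemma card_Omega1 p q i j : p != q -> i != j ->
  #|Omega1 p i| = n.-1 * #|Omega2 p q i j|.
Proof.
move=> pq ij; rewrite -sum1_card (partition_big (fun f : sub => f q) predT) //=.
rewrite (bigD1 i) //= big_pred0 => [|f]; last first.
  rewrite !inE; apply/negP => /andP[/andP[/injectiveP f_inj /eqP fp] /eqP fq].
  by move: pq; rewrite (f_inj p q) ?eqxx // fp fq.
rewrite add0n (eq_bigr (fun _ => #|Omega2 p q i j|)).
  by rewrite sum_nat_const cardC1 card_ord.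
move=> j' j'i; have ij' : i != j' by rewrite eq_sym.
rewrite (card_Omega2_idx p q ij ij') -sum1_card.
by apply: eq_bigl => f; rewrite !inE andbA.
Qed.

Lemma card_Omega2_gt0 p q i j : (k <= n)%N -> p != q -> i != j ->
  (0 < #|Omega2 p q i j|)%N.
Proof.
move=> kn pq ij.
have [s [sp sq]] := exists_perm_pair (pq : widen_ord kn p != widen_ord kn q) ij.
apply/card_gt0P; exists [ffun a => s (widen_ord kn a)].
rewrite !inE !ffunE sp sq !eqxx !andbT; apply/injectiveP => a b.
by rewrite !ffunE => /perm_inj /(congr1 val) /= /val_inj.
Qed.

Variable R : realFieldType.

Definition pos_invariant (F : sub -> R) : Prop :=
  forall s f, F (permute_pos s f) = F f.

Lemma sstar_pos_invariant (T : Type) (x : 'I_n -> T) (s : ('I_k -> T) -> R) :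
  (forall (g : 'I_k -> T) (sigma : 'S_k), s (fun a => g (sigma a)) = s g) ->
  pos_invariant (sstar x s).
Proof.
move=> s_sym sigma f; rewrite /sstar -(s_sym (fun a => x (f a)) sigma).
by congr s; apply: functional_extensionality => a; rewrite ffunE.
Qed.

Lemma sum_Omega1_pos F p p' i : pos_invariant F ->
  \sum_(f in Omega1 p i) F f = \sum_(f in Omega1 p' i) F f.
Proof.
move=> F_inv; rewrite -[p](tpermL p' p) -permute_pos_preim_Omega1.
rewrite [RHS](reindex_inj (@permute_pos_inj (tperm p' p))).
by apply: eq_big => [f|f _]; rewrite ?inE ?F_inv.
Qed.

Lemma sum_Omega2_pos F p q p' q' i j : pos_invariant F -> p != q -> p' != q' ->
  \sum_(f in Omega2 p q i j) F f = \sum_(f in Omega2 p' q' i j) F f.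
Proof.
move=> F_inv pq pq'; have [s [sp sq]] := exists_perm_pair pq' pq.
rewrite -sp -sq -permute_pos_preim_Omega2.
rewrite [RHS](reindex_inj (@permute_pos_inj s)).
by apply: eq_big => [f|f _]; rewrite ?inE ?F_inv.
Qed.

Lemma sum_in_codom F p i : pos_invariant F ->
  \sum_(f in Omega n k) F f * (i \in codom f)%:R =
  k%:R * \sum_(f in Omega1 p i) F f.
Proof.
move=> F_inv.
rewrite (eq_bigr (fun f => \sum_a F f * (f a == i)%:R)) => [|f]; last first.
  by rewrite inE => /injectiveP/natr_in_codom ->; rewrite mulr_sumr.
rewrite exchange_big /= (eq_bigr (fun _ => \sum_(f in Omega1 p i) F f)).
  by rewrite sumr_const card_ord mulr_natl.
by move=> a _; rewrite sum_mul_indicator (sum_Omega1_pos a p).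
Qed.

Lemma sum_in_codom2 F p q i j : pos_invariant F -> p != q -> i != j ->
  \sum_(f in Omega n k) F f * ((i \in codom f) && (j \in codom f))%:R =
  (k * k.-1)%:R * \sum_(f in Omega2 p q i j) F f.
Proof.
move=> F_inv pq ij.
rewrite (eq_bigr (fun f => \sum_a \sum_(b | b != a)
    F f * ((f a == i) && (f b == j))%:R)) => [|f]; last first.
  rewrite inE => /injectiveP/natr_in_codom2 -> //; rewrite mulr_sumr.
  by apply: eq_bigr => a _; rewrite mulr_sumr.
rewrite exchange_big /=.
rewrite (eq_bigr (fun a => \sum_(b | b != a) \sum_(f in Omega2 p q i j) F f)).
  under eq_bigr => a _ do rewrite sumr_const cardC1 card_ord.
  by rewrite sumr_const card_ord -mulrnA mulr_natl mulnC.
move=> a _; rewrite exchange_big /=; apply: eq_bigr => b ba.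
by rewrite sum_mul_indicator (sum_Omega2_pos i j F_inv _ pq) // eq_sym.
Qed.

Lemma avg1 (A : {set sub}) : (0 < #|A|)%N -> avg A (fun _ => 1 : R) = 1.
Proof. by move=> A_gt0; rewrite /avg sumr_const divff // pnatr_eq0 -lt0n. Qed.

Hypotheses (hk : (2 <= k)%N) (hkn : (k <= n)%N).

Lemma Estar_mul_wstar F i j : pos_invariant F -> i != j ->
  Estar (fun f => F f * wstar R i j f) =
  (k * k.-1)%:R / (n * n.-1)%:R *
    (Econd2 hk i j F - Econd1 hk i F - Econd1 hk j F + Estar F).
Proof.
move=> F_inv ij; have p12 : pos1 hk != pos2 hk by [].
have ji : j != i by rewrite eq_sym.
rewrite /Estar /Econd1 /Econd2 /avg -/(Omega1 (pos1 hk) i) -/(Omega1 (pos1 hk) j).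
rewrite -/(Omega2 (pos1 hk) (pos2 hk) i j).
have -> : \sum_(f in Omega n k) F f * wstar R i j f =
    (k * k.-1)%:R * \sum_(f in Omega2 (pos1 hk) (pos2 hk) i j) F f
    - (k.-1)%:R / (n.-1)%:R * (k%:R * \sum_(f in Omega1 (pos1 hk) i) F f)
    - (k.-1)%:R / (n.-1)%:R * (k%:R * \sum_(f in Omega1 (pos1 hk) j) F f)
    + (k * k.-1)%:R / (n * n.-1)%:R * \sum_(f in Omega n k) F f.
  rewrite -!sum_in_codom // -sum_in_codom2 // !mulr_sumr -!sumrB -big_split /=.
  by apply: eq_bigr => f _; rewrite /wstar; ring.
rewrite (card_Omega (pos1 hk) i).
rewrite (card_Omega1 p12 ij) (card_Omega1 p12 ji) (card_Omega2_idx _ _ ji ij).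
have B_gt0 := card_Omega2_gt0 hkn p12 ij.
have n_gt1 : (1 < n)%N := leq_trans hk hkn.
rewrite !natrM; field.
by rewrite !pnatr_eq0 -!lt0n B_gt0 ltn_predRL n_gt1 (ltnW n_gt1).
Qed.

Lemma Estar_wstar (i j : 'I_n) : i != j -> Estar (wstar R i j : sub -> R) = 0.
Proof.
move=> ij; have p12 : pos1 hk != pos2 hk by [].
have n_gt1 : (1 < n)%N := leq_trans hk hkn.
have B_gt0 := card_Omega2_gt0 hkn p12 ij.
have A_gt0 : (0 < #|Omega1 (pos1 hk) i|)%N.
  by rewrite (card_Omega1 p12 ij) muln_gt0 B_gt0 ltn_predRL n_gt1.
have A'_gt0 : (0 < #|Omega1 (pos1 hk) j|)%N by rewrite (card_Omega1_idx _ j i).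
have N_gt0 : (0 < #|Omega n k|)%N.
  by rewrite (card_Omega (pos1 hk) i) muln_gt0 A_gt0 (ltnW n_gt1).
transitivity (Estar (fun f : sub => 1 * wstar R i j f)).
  by rewrite /Estar /avg; congr (_ / _); apply: eq_bigr => f _; rewrite mul1r.
rewrite Estar_mul_wstar // /Econd1 /Econd2 /Estar !avg1 //.
by rewrite subrr sub0r addNr mulr0.
Qed.

Lemma Covstar_wstar F i j : pos_invariant F -> i != j ->
  Covstar F (wstar R i j) =
  'C(k, 2)%:R / 'C(n, 2)%:R *
    (Econd2 hk i j F - Econd1 hk i F - Econd1 hk j F + Estar F).
Proof.
move=> F_inv ij.
by rewrite /Covstar Estar_wstar // mulr0 subr0 Estar_mul_wstar // bin2_ratio.
Qed.

End Subsampling.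

Theorem proposition2 (R : realFieldType) (T : Type) (n k : nat)
  (hk : (2 <= k)%N) (hkn : (k <= n)%N)
  (x : 'I_n -> T) (s : ('I_k -> T) -> R)
  (s_sym : forall (g : 'I_k -> T) (sigma : 'S_k), s (fun a => g (sigma a)) = s g) :
  let sst := sstar x s in
  let s0 := Estar sst in
  let e1 := fun i => Econd1 hk i sst in
  let e2 := fun i j => Econd2 hk i j sst in
  (forall i j : 'I_n, i != j ->
     Covstar sst (wstar R i j) =
       ('C(k, 2))%:R / ('C(n, 2))%:R * (e2 i j - e1 i - e1 j + s0))
  /\
  \sum_(i : 'I_n) \sum_(j : 'I_n | (i < j)%N) (Covstar sst (wstar R i j)) ^+ 2 =
    (('C(k, 2))%:R ^+ 2 / ('C(n, 2))%:R ^+ 2) *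
      \sum_(i : 'I_n) \sum_(j : 'I_n | (i < j)%N) (e2 i j - e1 i - e1 j + s0) ^+ 2.
Proof.
move=> sst s0 e1 e2.
have cov (i j : 'I_n) : i != j -> Covstar sst (wstar R i j) =
    'C(k, 2)%:R / 'C(n, 2)%:R * (e2 i j - e1 i - e1 j + s0).
  exact: Covstar_wstar (sstar_pos_invariant x s_sym).
split=> //; rewrite mulr_sumr; apply: eq_bigr => i _; rewrite mulr_sumr.
apply: eq_bigr => j ij; rewrite cov ?exprMn ?exprVn //.
by apply/eqP => eij; rewrite eij ltnn in ij.
Qed.
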